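(* Let $r>1$ and integers $N\ge1$, $K\ge2$. For $p=(p^1,\dots,p^K)$ let $z^i=(\sum_{j=1}^ip^j)^N-(\sum_{j=1}^{i-1}p^j)^N$ and $f(p)=\frac{p^K}{z^K}\sum_{i=1}^{K-1}\frac{z^i}{\sum_{j=i}^Kp^j}$. Then the supremum of $f(p)$ over all $p$ with $rp^K\ge1$, $\sum_ip^i=1$, $p^i>0$ for all $i$ equals the supremum of $f(p)$ over all $p$ with $rp^K=1$, $\sum_ip^i=1$, $p^i>0$ for all $i$. *)

From HB Require Import structures.
From mathcomp Require Import all_boot all_order all_algebra.
From mathcomp Require Import all_classical all_reals ereal.
Set Implicit Arguments. Unset Strict Implicit. Unset Printing Implicit Defensive.
Import Order.TTheory GRing.Theory Num.Theory.
Local Open Scope ring_scope.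

(* A vector p = (p^1,...,p^K) is represented by p : nat -> R, using the
   1-based indices 1..K (values outside are irrelevant). *)

Definition zvec {R : realType} (N : nat) (p : nat -> R) (i : nat) : R :=
  (\sum_(1 <= j < i.+1) p j) ^+ N - (\sum_(1 <= j < i) p j) ^+ N.

Definition fobj {R : realType} (N K : nat) (p : nat -> R) : R :=
  p K / zvec N p K *
  \sum_(1 <= i < K) (zvec N p i / \sum_(i <= j < K.+1) p j).

Definition feas_ge {R : realType} (r : R) (K : nat) : set (nat -> R) :=
  [set p | 1 <= r * p K /\ \sum_(1 <= i < K.+1) p i = 1 /\
           (forall i, (1 <= i <= K)%N -> 0 < p i)].

Definition feas_eq {R : realType} (r : R) (K : nat) : set (nat -> R) :=
  [set p | r * p K = 1 /\ \sum_(1 <= i < K.+1) p i = 1 /\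
           (forall i, (1 <= i <= K)%N -> 0 < p i)].

(* Take a feasible p (so r p^K >= 1) and let u = p^1 + ... + p^(K-1).  Scale
   p^1, ..., p^(K-1) by lam = (1 - 1/r) / u >= 1 and lower p^K to 1/r: the
   result is still a probability vector, now with r p^K = 1.  Every z^i with
   i < K is multiplied by lam^N while every tail sum p^i + ... + p^K
   decreases, so the sum in f grows at least by the factor lam^N.  The
   prefactor p^K / z^K = (1 - u) / (1 - u^N) shrinks at most by the same
   factor, because x^N / (1 + x + ... + x^(N-1)) is nondecreasing in x > 0.
   So each value of f on the larger set is dominated by a value on the
   smaller one. *)

From HB Require Import structures.
From mathcomp Require Import all_boot all_order all_algebra.
From mathcomp Require Import all_classical all_reals ereal.
From mathcomp Require Import lra zify.
Set Implicit Arguments.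
Unset Strict Implicit.
Unset Printing Implicit Defensive.

Import Order.TTheory GRing.Theory Num.Theory.
Local Open Scope ring_scope.

Section GeometricSums.
Variable R : realFieldType.
Implicit Types (x u U : R) (n : nat).

Lemma subr1X x n : 1 - x ^+ n = (1 - x) * \sum_(i < n) x ^+ i.
Proof. by rewrite -opprB subrX1 -mulNr opprB. Qed.

Lemma geom_sum_gt0 x n : (0 < n)%N -> 0 <= x -> 0 < \sum_(i < n) x ^+ i.
Proof.
case: n => // n _ x_ge0; rewrite big_ord_recl expr0 ltr_pwDl //.
by apply: sumr_ge0 => i _; apply: exprn_ge0.
Qed.

Lemma expr_mul_geom_sum_le u U n : 0 < u -> u <= U ->
  u ^+ n * \sum_(i < n) U ^+ i <= U ^+ n * \sum_(i < n) u ^+ i.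
Proof.
move=> u_gt0 le_uU; rewrite !mulr_sumr; apply: ler_sum => i _.
have U_ge0 : 0 <= U by lra.
case: i => i /= /ltnW/subnKC <-; rewrite !exprD mulrAC [X in _ <= X]mulrAC.
rewrite [U ^+ i * _]mulrC ler_wpM2l ?mulr_ge0 ?exprn_ge0 ?(ltW u_gt0) //.
by apply: lerXn2r; rewrite ?nnegrE ?(ltW u_gt0).
Qed.

Lemma one_sub_ratio_le u U n : (0 < n)%N -> 0 < u -> u <= U -> U < 1 ->
  (1 - u) / (1 - u ^+ n) <= (1 - U) / (1 - U ^+ n) * (U / u) ^+ n.
Proof.
move=> n_gt0 u_gt0 le_uU U_lt1.
have U_gt0 : 0 < U by lra.
have Gu_gt0 : 0 < \sum_(i < n) u ^+ i by rewrite geom_sum_gt0 ?ltW.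
have GU_gt0 : 0 < \sum_(i < n) U ^+ i by rewrite geom_sum_gt0 ?ltW.
have u_neq1 : 1 - u != 0 by lra.
have U_neq1 : 1 - U != 0 by lra.
rewrite !subr1X !invfM !mulrA !mulfV // !mul1r.
rewrite expr_div_n -invf_div -invfM.
rewrite lef_pV2 ?posrE ?mulr_gt0 ?invr_gt0 ?exprn_gt0 //.
rewrite mulrA ler_pdivrMr ?exprn_gt0 // mulrC [leRHS]mulrC.
exact: expr_mul_geom_sum_le.
Qed.

End GeometricSums.

Section NatSums.

Lemma sum_nat_suffix (V : zmodType) (F : nat -> V) m i n : (m <= i <= n)%N ->
  \sum_(i <= j < n) F j = \sum_(m <= j < n) F j - \sum_(m <= j < i) F j.
Proof.
by case/andP=> le_mi le_in; rewrite (big_cat_nat le_mi le_in) addrC addKr.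
Qed.

Variable R : numDomainType.
Implicit Type F : nat -> R.

Lemma sum_nat_ge0 F m n :
  (forall j, (m <= j < n)%N -> 0 <= F j) -> 0 <= \sum_(m <= j < n) F j.
Proof.
by move=> F_ge0; rewrite big_nat_cond; apply: sumr_ge0 => j /andP[/F_ge0].
Qed.

Lemma sum_nat_prefix_le F m i n : (m <= i <= n)%N ->
  (forall j, (i <= j < n)%N -> 0 <= F j) ->
  \sum_(m <= j < i) F j <= \sum_(m <= j < n) F j.
Proof.
case/andP=> le_mi le_in F_ge0.
by rewrite (big_cat_nat le_mi le_in) lerDl sum_nat_ge0.
Qed.

End NatSums.

Lemma zvec_ge0 (R : realType) N (p : nat -> R) i :
  (forall j, (1 <= j <= i)%N -> 0 <= p j) -> 0 <= zvec N p i.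
Proof.
case: i => [_|i p_ge0]; first by rewrite /zvec !big_geq // subrr.
have P_ge0 : 0 <= \sum_(1 <= j < i.+1) p j.
  by apply: sum_nat_ge0 => j ?; apply: p_ge0; lia.
have P_le : \sum_(1 <= j < i.+1) p j <= \sum_(1 <= j < i.+2) p j.
  by apply: sum_nat_prefix_le => [|j ?]; [lia|apply: p_ge0; lia].
by rewrite /zvec subr_ge0; apply: lerXn2r; rewrite ?nnegrE // (le_trans P_ge0).
Qed.

Definition scale_front {R : ringType} (K : nat) (lam s : R) (p : nat -> R) :
  nat -> R := fun j => if j == K then s else lam * p j.

Section ScaleFront.
Variables (R : ringType) (K : nat) (lam s : R) (p : nat -> R).

Lemma scale_front_last : scale_front K lam s p K = s.
Proof. by rewrite /scale_front eqxx. Qed.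

Lemma sum_scale_front a b : (b <= K)%N ->
  \sum_(a <= j < b) scale_front K lam s p j = lam * \sum_(a <= j < b) p j.
Proof.
move=> le_bK; rewrite mulr_sumr; apply: eq_big_nat => j /andP[_ lt_jb].
by rewrite /scale_front ifN // neq_ltn (leq_trans lt_jb).
Qed.

Lemma sum_scale_front_all : (0 < K)%N ->
  \sum_(1 <= j < K.+1) scale_front K lam s p j
    = lam * \sum_(1 <= j < K) p j + s.
Proof.
by move=> K_gt0; rewrite big_nat_recr //= sum_scale_front // scale_front_last.
Qed.

End ScaleFront.

Lemma zvec_scale_front (R : realType) N K (lam s : R) p i : (i < K)%N ->
  zvec N (scale_front K lam s p) i = lam ^+ N * zvec N p i.
Proof.
move=> lt_iK.
by rewrite /zvec !sum_scale_front ?(ltnW lt_iK) // !exprMn mulrBr.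
Qed.

Section Improvement.
Variables (R : realType) (K : nat) (p : nat -> R).
Hypotheses (K_gt1 : (1 < K)%N) (p_gt0 : forall i, (1 <= i <= K)%N -> 0 < p i).

Local Notation u := (\sum_(1 <= j < K) p j).

Lemma front_sum_gt0 : 0 < u.
Proof.
have : \sum_(1 <= j < 2) p j <= u.
  by apply: sum_nat_prefix_le => [|j ?]; [lia|apply/ltW/p_gt0; lia].
by rewrite big_nat1; apply: lt_le_trans; apply: p_gt0; lia.
Qed.

Hypothesis p_sum1 : \sum_(1 <= i < K.+1) p i = 1.

Lemma last_eq_one_sub_front : p K = 1 - u.
Proof. by rewrite -p_sum1 big_nat_recr /= 1?addrAC ?subrr ?add0r //; lia. Qed.

Variables s lam : R.
Hypotheses (s_gt0 : 0 < s) (s_le_pK : s <= p K) (lam_front : lam * u = 1 - s).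

Local Notation q := (scale_front K lam s p).

Lemma scale_front_ge1 : 1 <= lam.
Proof.
have pK := last_eq_one_sub_front.
by rewrite -(ler_pM2r front_sum_gt0) mul1r lam_front lerBrDr addrC -lerBrDr -pK.
Qed.

Lemma scale_front_sum1 : \sum_(1 <= j < K.+1) q j = 1.
Proof. by rewrite sum_scale_front_all 1?ltnW // lam_front subrK. Qed.

Lemma scale_front_gt0 i : (1 <= i <= K)%N -> 0 < q i.
Proof.
move=> iK; rewrite /scale_front; case: eqP => // _.
by rewrite mulr_gt0 ?p_gt0 // (lt_le_trans ltr01 scale_front_ge1).
Qed.

Variable N : nat.

Local Notation inner f :=
  (\sum_(1 <= i < K) (zvec N f i / \sum_(i <= j < K.+1) f j)).

Lemma inner_scale_front_ge : lam ^+ N * inner p <= inner q.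
Proof.
rewrite mulr_sumr; apply: ler_sum_nat => i iK.
set P := \sum_(1 <= j < i) p j.
have P_ge0 : 0 <= P by apply: sum_nat_ge0 => j ?; apply/ltW/p_gt0; lia.
have P_le_u : P <= u.
  by apply: sum_nat_prefix_le => [|j ?]; [lia|apply/ltW/p_gt0; lia].
have tail_p : \sum_(i <= j < K.+1) p j = 1 - P.
  by rewrite (@sum_nat_suffix _ _ 1) ?p_sum1 //; lia.
have tail_q : \sum_(i <= j < K.+1) q j = 1 - lam * P.
  by rewrite (@sum_nat_suffix _ _ 1) ?scale_front_sum1 ?sum_scale_front //; lia.
have lam_ge0 : 0 <= lam := le_trans ler01 scale_front_ge1.
have lamP_lt1 : lam * P < 1.
  rewrite (le_lt_trans (_ : _ <= 1 - s)) ?gtrDl ?oppr_lt0 //.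
  by rewrite -lam_front ler_wpM2l.
have P_le_lamP : P <= lam * P by rewrite ler_peMl // scale_front_ge1.
rewrite tail_p tail_q zvec_scale_front 1?mulrA ?ler_wpM2l //.
- by rewrite mulr_ge0 ?exprn_ge0 ?zvec_ge0 // => j ?; apply/ltW/p_gt0; lia.
- by rewrite lef_pV2 ?posrE ?subr_gt0 ?lerD2l ?lerN2 // (le_lt_trans P_le_lamP).
- by case/andP: iK.
Qed.

Hypothesis N_gt0 : (0 < N)%N.

Lemma fobj_scale_front_ge : fobj N K p <= fobj N K q.
Proof.
have u_gt0 := front_sum_gt0.
have s_lt1 : s < 1.
  by rewrite (le_lt_trans s_le_pK) // last_eq_one_sub_front gtrDl oppr_lt0.
have u_le : u <= 1 - s by rewrite -lam_front ler_peMl ?scale_front_ge1 // ltW.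
have inner_ge0 : 0 <= inner p.
  apply: sum_nat_ge0 => i iK.
  by rewrite divr_ge0 ?zvec_ge0 ?sum_nat_ge0 // => j ?; apply/ltW/p_gt0; lia.
have U_lt1 : 1 - s < 1 by rewrite gtrDl oppr_lt0.
have ratio := one_sub_ratio_le N_gt0 u_gt0 u_le U_lt1.
rewrite subKr -lam_front mulfK ?gt_eqF // lam_front in ratio.
have zvec_pK : zvec N p K = 1 - u ^+ N by rewrite /zvec p_sum1 expr1n.
have zvec_qK : zvec N q K = 1 - (1 - s) ^+ N.
  by rewrite /zvec scale_front_sum1 sum_scale_front // lam_front expr1n.
rewrite /fobj zvec_pK zvec_qK scale_front_last last_eq_one_sub_front.
apply: le_trans (ler_wpM2r inner_ge0 ratio) _.
rewrite -(mulrA (s / _)) ler_wpM2l ?inner_scale_front_ge // divr_ge0 ?ltW //.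
by rewrite subr_gt0 expr_lt1 ?subr_ge0 ?ltW.
Qed.

End Improvement.

Lemma feas_ge_improved_by_eq (R : realType) (r : R) N K p :
    1 < r -> (0 < N)%N -> (1 < K)%N -> feas_ge r K p ->
  exists2 q, feas_eq r K q & fobj N K p <= fobj N K q.
Proof.
move=> r_gt1 N_gt0 K_gt1 [r_pK [p_sum1 p_gt0]].
have r_gt0 : 0 < r := lt_trans ltr01 r_gt1.
have s_le_pK : r^-1 <= p K by rewrite -[r^-1]mulr1 ler_pdivrMl.
have s_gt0 : 0 < r^-1 by rewrite invr_gt0.
pose lam := (1 - r^-1) / \sum_(1 <= j < K) p j.
have lam_front : lam * \sum_(1 <= j < K) p j = 1 - r^-1.
  by rewrite divfK // gt_eqF // front_sum_gt0.
exists (scale_front K lam r^-1 p); last exact: fobj_scale_front_ge.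
split; first by rewrite scale_front_last mulfV ?gt_eqF.
by split; [apply: scale_front_sum1 | apply: scale_front_gt0].
Qed.

Local Open Scope classical_set_scope.

Lemma feas_eq_sub_ge (R : realType) (r : R) K : feas_eq r K `<=` feas_ge r K.
Proof. by move=> p [r_pK p_feas]; rewrite /feas_ge /= r_pK. Qed.

Theorem lemma4 (R : realType) (r : R) (N K : nat)
  (hr : 1 < r) (hN : (1 <= N)%N) (hK : (2 <= K)%N) :
  ereal_sup [set (fobj N K p)%:E | p in feas_ge r K] =
  ereal_sup [set (fobj N K p)%:E | p in feas_eq r K].
Proof.
apply: le_anti; apply/andP; split.
  apply: ge_ereal_sup => _ [p /(feas_ge_improved_by_eq hr hN hK) [q q_feas le_pq]] <-.
  apply: (@le_trans _ _ (fobj N K q)%:E); first by rewrite lee_fin.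
  by apply: ereal_sup_ubound; exists q.
exact/le_ereal_sup/image_subset/feas_eq_sub_ge.
Qed.
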